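(* Let $(X,f)$ be a dynamical system, $r\in\mathbb{N}$, and $\mathbf{a}=(a_1,\dots,a_{r+1})\in\mathbb{N}^{r+1}_*$. Then $\overline{Orb(\Delta_{X^{r+1}},f^{(\mathbf{a})})}=X^{r+1}$ if and only if $(X,f)$ is $\Delta$-$\mathbf{a}'$-transitive, where $\mathbf{a}'=(a_2-a_1,a_3-a_1,\dots,a_{r+1}-a_1)$.
   Context: A dynamical system is a pair $(X,f)$ with $X$ a compact metric space and $f:X\to X$ continuous. $\mathbb{N}^m_*=\{(n_1,\dots,n_m)\in\mathbb{N}^m: n_1<\dots<n_m\}$. For $\mathbf{a}\in\mathbb{N}^m$, $f^{(\mathbf{a})}=f^{a_1}\times\dots\times f^{a_m}:X^m\to X^m$. $\Delta_{X^m}=\{(x,\dots,x):x\in X\}$. For a map $g$ and set $A$, $Orb(A,g)=\bigcup_{n\ge0}g^n(A)$. For a system $(Y,g)$, $y$ is a transitive point if its $\omega$-limit set equals $Y$. $(X,f)$ is $\Delta$-$\mathbf{b}$-transitive ($\mathbf{b}\in\mathbb{N}^r$) if there is $x\in X$ such that $(x,\dots,x)$ is a transitive point of $(X^r,f^{(\mathbf{b})})$. *)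

From Stdlib Require Import Reals Arith.
Open Scope R_scope.

Record is_metric {X : Type} (d : X -> X -> R) : Prop := {
  metric_nonneg : forall x y, 0 <= d x y;
  metric_eq0 : forall x y, d x y = 0 <-> x = y;
  metric_sym : forall x y, d x y = d y x;
  metric_triangle : forall x y z, d x z <= d x y + d y z
}.

(* Sequential compactness (equivalent to compactness for metric spaces). *)
Definition seq_compact {X : Type} (d : X -> X -> R) : Prop :=
  forall u : nat -> X, exists (phi : nat -> nat) (l : X),
    (forall n m, (n < m)%nat -> (phi n < phi m)%nat) /\
    (forall eps, eps > 0 -> exists N, forall n, (N <= n)%nat -> d (u (phi n)) l < eps).

Definition compact_metric_space {X : Type} (d : X -> X -> R) : Prop :=
  is_metric d /\ seq_compact d.

Definition continuous_map {X : Type} (d : X -> X -> R) (f : X -> X) : Prop :=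
  forall x eps, eps > 0 -> exists delta, delta > 0 /\
    forall y, d x y < delta -> d (f x) (f y) < eps.

(* Points of X^m are represented as functions nat -> X, only the
   coordinates i < m being relevant; X^m carries the product topology,
   given by the max-metric on the coordinates i < m. *)

Definition prodmap {X : Type} (a : nat -> nat) (f : X -> X) (u : nat -> X) : nat -> X :=
  fun i => Nat.iter (a i) f (u i).

Definition diagonal {X : Type} (u : nat -> X) : Prop :=
  exists x : X, forall i, u i = x.

Definition Orb {Y : Type} (A : Y -> Prop) (g : Y -> Y) (y : Y) : Prop :=
  exists (n : nat) (v : Y), A v /\ y = Nat.iter n g v.

Definition in_closure {X : Type} (d : X -> X -> R) (m : nat)
    (S : (nat -> X) -> Prop) (y : nat -> X) : Prop :=
  forall eps, eps > 0 -> exists u, S u /\ forall i, (i < m)%nat -> d (u i) (y i) < eps.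

Definition omega_limit {X : Type} (d : X -> X -> R) (m : nat)
    (g : (nat -> X) -> (nat -> X)) (y z : nat -> X) : Prop :=
  forall eps, eps > 0 -> forall N : nat, exists n, (N <= n)%nat /\
    forall i, (i < m)%nat -> d (Nat.iter n g y i) (z i) < eps.

Definition transitive_point {X : Type} (d : X -> X -> R) (m : nat)
    (g : (nat -> X) -> (nat -> X)) (y : nat -> X) : Prop :=
  forall z : nat -> X, omega_limit d m g y z.

Definition Delta_transitive {X : Type} (d : X -> X -> R) (f : X -> X)
    (r : nat) (b : nat -> nat) : Prop :=
  exists x : X, transitive_point d r (prodmap b f) (fun _ => x).

Definition strictly_increasing_tuple (m : nat) (a : nat -> nat) : Prop :=
  forall i j, (i < j)%nat -> (j < m)%nat -> (a i < a j)%nat.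

(* Put c_i = a_i - a_0, so c_0 = 0 and (c_1, ..., c_r) = a'.  The n-th point of the
   f^(a)-orbit of (z,...,z) is (u, f^(n c_1) u, ..., f^(n c_r) u) with u = f^(n a_0) z, so
   once f is onto, the diagonal has a dense f^(a)-orbit iff it has a dense f^(c)-orbit.
   - (=>) Density forces f to be onto (a_0 >= 1, and two coordinates exclude the time 0).
     Pulling back along iterates of f, every tail {n >= k} of the f^(c)-orbit stays dense.
     A point (u, f^(n a') u) near (x, t) says that u is near x and visits near t at a time
     n >= k; hence the points visiting every cell of a 1/(k+1)-net of X^r after time k form
     an open dense set, and a point of the Baire intersection is Delta-a'-transitive.
   - (<=) A Delta-a'-transitive point x makes f onto; with u = f^K x close to y_0, the image
     under f^K of the dense f^(a')-orbit of (x,...,x) yields (u, f^(n a') u) close to y. *)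

From Stdlib Require Import Reals Arith Lra Lia List Classical ClassicalEpsilon.
Open Scope R_scope.

Definition surjective {X : Type} (f : X -> X) : Prop := forall y, exists x, f x = y.

Lemma iter_commute {X : Type} (f : X -> X) n m x :
  Nat.iter n f (Nat.iter m f x) = Nat.iter m f (Nat.iter n f x).
Proof. rewrite <- !Nat.iter_add, Nat.add_comm. reflexivity. Qed.

Lemma iter_prodmap {X : Type} (b : nat -> nat) (f : X -> X) n u i :
  Nat.iter n (prodmap b f) u i = Nat.iter (n * b i) f (u i).
Proof.
  induction n as [|n IH]; [reflexivity|].
  simpl. unfold prodmap at 1. rewrite IH, <- Nat.iter_add. reflexivity.
Qed.

Lemma iter_surjective {X : Type} (f : X -> X) (Hs : surjective f) n y :
  exists z, Nat.iter n f z = y.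
Proof.
  revert y; induction n as [|n IH]; intros y; [exists y; reflexivity|].
  destruct (IH y) as [z' Hz']. destruct (Hs z') as [z Hz].
  exists z. rewrite Nat.iter_succ_r, Hz. exact Hz'.
Qed.

Lemma iter_continuous {X : Type} (d : X -> X -> R) (f : X -> X) (Hf : continuous_map d f) n :
  continuous_map d (Nat.iter n f).
Proof.
  induction n as [|n IH]; intros x eps He.
  - exists eps; split; auto.
  - simpl. destruct (Hf (Nat.iter n f x) eps He) as [d1 [Hd1 H1]].
    destruct (IH x d1 Hd1) as [d2 [Hd2 H2]].
    exists d2; split; auto.
Qed.

Lemma le_of_forall_lt (u v : R) : (forall eps, eps > 0 -> u < v + eps) -> u <= v.
Proof.
  intros H. destruct (Rle_or_lt u v) as [h|h]; auto.
  specialize (H (u - v) ltac:(lra)). lra.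
Qed.

Lemma inv_succ_pos k : / INR (S k) > 0.
Proof. apply Rinv_0_lt_compat, lt_0_INR; lia. Qed.

Lemma inv_succ_small eps : eps > 0 -> exists M, forall k, (M <= k)%nat -> / INR (S k) < eps.
Proof.
  intros He. destruct (archimed_cor1 eps He) as [M [HM HM0]].
  exists M. intros k Hk. eapply Rle_lt_trans; [|exact HM].
  apply Rinv_le_contravar; [apply lt_0_INR; lia | apply le_INR; lia].
Qed.

Lemma strict_mono_ge (phi : nat -> nat) :
  (forall n m, (n < m)%nat -> (phi n < phi m)%nat) -> forall n, (n <= phi n)%nat.
Proof.
  intros H n; induction n as [|n IH]; [lia|].
  specialize (H n (S n) ltac:(lia)). lia.
Qed.

Fixpoint greedy_list {A : Type} (g : list A -> A) (n : nat) : list A :=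
  match n with 0 => nil | S n => g (greedy_list g n) :: greedy_list g n end.

Lemma greedy_list_in {A : Type} (g : list A -> A) m n :
  (m < n)%nat -> In (g (greedy_list g m)) (greedy_list g n).
Proof.
  induction n as [|n IH]; intros H; [lia|]. simpl.
  destruct (Nat.eq_dec m n) as [->|Hne]; [left; reflexivity | right; apply IH; lia].
Qed.

Fixpoint iterate_indexed {A : Type} (s : nat -> A -> A) (a0 : A) (n : nat) : A :=
  match n with 0 => a0 | S n => s n (iterate_indexed s a0 n) end.

Section MetricSpace.

Context {X : Type} (d : X -> X -> R).
Hypothesis Hm : is_metric d.

Lemma dist_self x : d x x = 0.
Proof. apply (metric_eq0 d Hm); reflexivity. Qed.

Lemma common_radius (c : nat -> X) (Q : nat -> X -> Prop) m :
  (forall i, (i < m)%nat -> exists e, e > 0 /\ forall y, d (c i) y < e -> Q i y) ->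
  exists e, e > 0 /\ forall i, (i < m)%nat -> forall y, d (c i) y < e -> Q i y.
Proof.
  induction m as [|m IH]; intros H.
  - exists 1; split; [lra | intros; lia].
  - destruct IH as [e1 [He1 H1]]; [intros i Hi; apply H; lia|].
    destruct (H m ltac:(lia)) as [e2 [He2 H2]].
    exists (Rmin e1 e2). split; [apply Rmin_glb_lt; lra|].
    intros i Hi y Hy. pose proof (Rmin_l e1 e2). pose proof (Rmin_r e1 e2).
    destruct (Nat.eq_dec i m) as [->|Hne]; [apply H2; lra | apply H1; [lia|lra]].
Qed.

Definition is_open (P : X -> Prop) : Prop :=
  forall x, P x -> exists e, e > 0 /\ forall y, d x y < e -> P y.

Definition is_dense (P : X -> Prop) : Prop :=
  forall x e, e > 0 -> exists y, d x y < e /\ P y.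

Lemma preimage_ball_open (g : X -> X) (Hg : continuous_map d g) t e :
  is_open (fun x => d (g x) t < e).
Proof.
  intros x Hx; cbv beta in Hx |- *.
  assert (Hgap : e - d (g x) t > 0) by lra.
  destruct (Hg x _ Hgap) as [del [Hdel Hclose]].
  exists del. split; [exact Hdel|]. intros y Hy. specialize (Hclose y Hy).
  pose proof (metric_triangle d Hm (g y) (g x) t).
  rewrite (metric_sym d Hm (g y) (g x)) in H. lra.
Qed.

Lemma open_list_inter {T : Type} (P : T -> X -> Prop) (L : list T) :
  (forall t, In t L -> is_open (P t)) -> is_open (fun x => forall t, In t L -> P t x).
Proof.
  induction L as [|t0 L IH]; intros H x Hx.
  - exists 1; split; [lra|]. intros y _ t [].
  - destruct (H t0 (or_introl eq_refl) x (Hx t0 (or_introl eq_refl))) as [e1 [He1 H1]].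
    destruct (IH (fun t Ht => H t (or_intror Ht)) x (fun t Ht => Hx t (or_intror Ht)))
      as [e2 [He2 H2]].
    exists (Rmin e1 e2). split; [apply Rmin_glb_lt; lra|].
    pose proof (Rmin_l e1 e2). pose proof (Rmin_r e1 e2).
    intros y Hy t [<-|Ht]; [apply H1; lra | apply H2; [lra | exact Ht]].
Qed.

Lemma dense_list_inter {T : Type} (P : T -> X -> Prop) (L : list T) :
  (forall t, In t L -> is_open (P t) /\ is_dense (P t)) ->
  is_dense (fun x => forall t, In t L -> P t x).
Proof.
  induction L as [|t0 L IH]; intros H x e He.
  - exists x. split; [rewrite dist_self; exact He | intros t []].
  - destruct (H t0 (or_introl eq_refl)) as [Hop Hdn].
    destruct (Hdn x e He) as [y [Hy Py]].
    destruct (Hop y Py) as [sig [Hsig Hs]].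
    destruct (IH (fun t Ht => H t (or_intror Ht)) y (Rmin sig (e - d x y))) as [z [Hz Pz]].
    { apply Rmin_glb_lt; lra. }
    pose proof (Rmin_l sig (e - d x y)). pose proof (Rmin_r sig (e - d x y)).
    exists z. split; [pose proof (metric_triangle d Hm x y z); lra|].
    intros t [<-|Ht]; [apply Hs; lra | exact (Pz t Ht)].
Qed.

Definition in_closed_ball (b : X * R) (w : X) : Prop := d (fst b) w <= snd b.

Lemma shrink_ball (G : X -> Prop) : is_open G -> is_dense G ->
  forall b, snd b > 0 -> exists b', snd b' > 0 /\
    forall w, in_closed_ball b' w -> in_closed_ball b w /\ G w.
Proof.
  intros Hop Hdn [c rho] Hrho; simpl in Hrho.
  destruct (Hdn c (rho / 2) ltac:(lra)) as [y [Hy Gy]].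
  destruct (Hop y Gy) as [sig [Hsig Hs]].
  assert (0 < Rmin sig (rho / 2)) by (apply Rmin_glb_lt; lra).
  pose proof (Rmin_l sig (rho / 2)). pose proof (Rmin_r sig (rho / 2)).
  exists (y, Rmin sig (rho / 2) / 2). unfold in_closed_ball; simpl. split; [lra|].
  intros w Hw. split; [pose proof (metric_triangle d Hm c y w); lra | apply Hs; lra].
Qed.

Hypothesis Hsc : seq_compact d.

Lemma image_closed (f : X -> X) (Hf : continuous_map d f) p :
  (forall eps, eps > 0 -> exists z, d p (f z) < eps) -> exists z, f z = p.
Proof.
  intros H.
  destruct (choice (fun n z => d p (f z) < / INR (S n))) as [u Hu].
  { intro n. apply H, inv_succ_pos. }
  destruct (Hsc u) as [phi [l [Hphi Hl]]].
  exists l. apply (metric_eq0 d Hm). rewrite (metric_sym d Hm).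
  apply Rle_antisym; [|apply (metric_nonneg d Hm)].
  apply le_of_forall_lt. intros eps He. rewrite Rplus_0_l.
  destruct (Hf l (eps / 2) ltac:(lra)) as [del [Hdel Hc]].
  destruct (Hl del Hdel) as [N HN].
  destruct (inv_succ_small (eps / 2) ltac:(lra)) as [M HM].
  pose (n := Nat.max N M).
  specialize (HN n ltac:(lia)). pose proof (strict_mono_ge phi Hphi n).
  specialize (HM (phi n) ltac:(lia)). specialize (Hu (phi n)).
  rewrite (metric_sym d Hm) in HN. specialize (Hc _ HN).
  pose proof (metric_triangle d Hm p (f (u (phi n))) (f l)).
  rewrite (metric_sym d Hm (f l)) in Hc. lra.
Qed.

(* Total boundedness: otherwise a greedy eps-separated sequence would have no convergent
   subsequence. *)
Lemma finite_net eps : eps > 0 -> exists F : list X, forall x, exists p, In p F /\ d p x < eps.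
Proof.
  intros He. apply NNPP; intro Hno.
  assert (Hfar : forall F : list X, exists x, forall p, In p F -> d p x >= eps).
  { intro F. apply NNPP; intro Hnear. apply Hno. exists F. intro x.
    apply NNPP; intro Hx. apply Hnear. exists x. intros p Hp.
    apply Rnot_lt_ge. intro Hpx. apply Hx. exists p; auto. }
  destruct (choice _ Hfar) as [g Hg].
  destruct (Hsc (fun n => g (greedy_list g n))) as [phi [l [Hphi Hl]]].
  destruct (Hl (eps / 2) ltac:(lra)) as [N HN].
  pose proof (HN N (le_n _)) as HN0. pose proof (HN (S N) ltac:(lia)) as HN1.
  pose proof (Hg (greedy_list g (phi (S N))) (g (greedy_list g (phi N)))
               (greedy_list_in g _ _ (Hphi N (S N) ltac:(lia)))) as Hsep.
  pose proof (metric_triangle d Hm (g (greedy_list g (phi N))) l (g (greedy_list g (phi (S N))))).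
  rewrite (metric_sym d Hm l) in H. lra.
Qed.

Lemma product_net (x0 : X) eps r : eps > 0 ->
  exists L : list (nat -> X), forall z : nat -> X,
    exists t, In t L /\ forall i, (i < r)%nat -> d (t i) (z i) < eps.
Proof.
  intros He. destruct (finite_net eps He) as [F HF].
  induction r as [|r [L HL]].
  - exists ((fun _ => x0) :: nil). intros z. exists (fun _ => x0).
    split; [left; reflexivity | intros; lia].
  - exists (flat_map (fun t => map (fun p i => if Nat.eqb i r then p else t i) F) L).
    intros z. destruct (HL z) as [t [Ht Htz]]. destruct (HF (z r)) as [p [Hp Hpz]].
    exists (fun i => if Nat.eqb i r then p else t i). split.
    + apply in_flat_map. exists t. split; [exact Ht|].
      apply in_map_iff. exists p. split; [reflexivity | exact Hp].
    + intros i Hi. destruct (Nat.eqb_spec i r) as [->|Hne]; [exact Hpz | apply Htz; lia].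
Qed.

(* Baire category theorem: a nested sequence of closed balls, the (k+1)-st inside G k,
   has centres with a limit point lying in every ball. *)
Theorem baire (x0 : X) (G : nat -> X -> Prop) :
  (forall k, is_open (G k)) -> (forall k, is_dense (G k)) -> exists x, forall k, G k x.
Proof.
  intros Hop Hdn.
  assert (Hstep : forall kb : nat * (X * R), exists b', snd (snd kb) > 0 ->
      snd b' > 0 /\ forall w, in_closed_ball b' w -> in_closed_ball (snd kb) w /\ G (fst kb) w).
  { intros [k b]. destruct (Rlt_dec 0 (snd b)) as [Hb|Hb].
    - destruct (shrink_ball (G k) (Hop k) (Hdn k) b Hb) as [b' Hb']. exists b'; intros _; exact Hb'.
    - exists b. simpl; intros; lra. }
  destruct (choice _ Hstep) as [s Hs].
  pose (ball := iterate_indexed (fun k b => s (k, b)) (x0, 1)).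
  assert (Hpos : forall k, snd (ball k) > 0).
  { induction k as [|k IH]; [simpl; lra | exact (proj1 (Hs (k, ball k) IH))]. }
  assert (Hsucc : forall k w, in_closed_ball (ball (S k)) w -> in_closed_ball (ball k) w /\ G k w).
  { intros k. exact (proj2 (Hs (k, ball k) (Hpos k))). }
  assert (Hnest : forall k j w, in_closed_ball (ball (j + k)%nat) w -> in_closed_ball (ball k) w).
  { intros k j; induction j as [|j IH]; intros w Hw; [exact Hw|]. apply IH, (Hsucc (j + k)%nat), Hw. }
  destruct (Hsc (fun n => fst (ball n))) as [phi [l [Hphi Hl]]].
  exists l. intro k. apply (Hsucc k).
  unfold in_closed_ball. apply le_of_forall_lt. intros eps He.
  destruct (Hl eps He) as [N HN].
  pose (n := Nat.max N (S k)). specialize (HN n ltac:(lia)).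
  pose proof (strict_mono_ge phi Hphi n).
  assert (Hc : in_closed_ball (ball (S k)) (fst (ball (phi n)))).
  { apply (Hnest (S k) (phi n - S k)%nat). replace (phi n - S k + S k)%nat with (phi n) by lia.
    unfold in_closed_ball. rewrite dist_self. left; apply Hpos. }
  pose proof (metric_triangle d Hm (fst (ball (S k))) (fst (ball (phi n))) l).
  unfold in_closed_ball in Hc. lra.
Qed.

End MetricSpace.

Definition dense_in_power {X : Type} (d : X -> X -> R) (m : nat) (S : (nat -> X) -> Prop) : Prop :=
  forall y, in_closure d m S y.

Definition orbit_from {Y : Type} (k : nat) (A : Y -> Prop) (g : Y -> Y) (y : Y) : Prop :=
  exists n v, (k <= n)%nat /\ A v /\ y = Nat.iter n g v.

Lemma iter_rebase {X : Type} (f : X -> X) a0 ai n z : (a0 <= ai)%nat ->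
  Nat.iter (n * ai) f z = Nat.iter (n * (ai - a0)) f (Nat.iter (n * a0) f z).
Proof. intros Hle. rewrite <- Nat.iter_add. f_equal. nia. Qed.

Section Dynamics.

Context {X : Type} (d : X -> X -> R) (f : X -> X).
Hypothesis Hm : is_metric d.
Hypothesis Hf : continuous_map d f.

Lemma Orb_diagonal_coords b u :
  Orb diagonal (prodmap b f) u -> exists n w, forall i, u i = Nat.iter (n * b i) f w.
Proof. intros [n [v [[w Hw] ->]]]. exists n, w. intro i. rewrite iter_prodmap, Hw. reflexivity. Qed.

Lemma orbit_from_diagonal_coords k b u :
  orbit_from k diagonal (prodmap b f) u ->
  exists n w, (k <= n)%nat /\ forall i, u i = Nat.iter (n * b i) f w.
Proof.
  intros [n [v [Hn [[w Hw] ->]]]]. exists n, w. split; [exact Hn|].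
  intro i. rewrite iter_prodmap, Hw. reflexivity.
Qed.

Lemma Orb_diagonal_intro b n w : Orb diagonal (prodmap b f) (Nat.iter n (prodmap b f) (fun _ => w)).
Proof. exists n, (fun _ => w). split; [exists w|]; reflexivity. Qed.

Lemma orbit_from_diagonal_intro k b n w : (k <= n)%nat ->
  orbit_from k diagonal (prodmap b f) (Nat.iter n (prodmap b f) (fun _ => w)).
Proof. intros Hn. exists n, (fun _ => w). repeat split; [exact Hn | exists w; reflexivity]. Qed.

(* For a continuous surjection f, coordinatewise iterates (f^(c_i))_i map dense subsets of
   X^m to dense subsets: pull the target back, then use continuity. *)
Lemma dense_under_iterates (Hs : surjective f) m (c : nat -> nat) (S T : (nat -> X) -> Prop) :
  dense_in_power d m S ->
  (forall u, S u -> exists v, T v /\ forall i, (i < m)%nat -> v i = Nat.iter (c i) f (u i)) ->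
  dense_in_power d m T.
Proof.
  intros HS HST y eps He.
  destruct (choice (fun i p => Nat.iter (c i) f p = y i)) as [p Hp].
  { intro i. apply iter_surjective, Hs. }
  destruct (common_radius d p (fun i w => d (Nat.iter (c i) f (p i)) (Nat.iter (c i) f w) < eps) m)
    as [del [Hdel Hdel']].
  { intros i _. exact (iter_continuous d f Hf (c i) (p i) eps He). }
  destruct (HS p del Hdel) as [u [Su Hu]].
  destruct (HST u Su) as [v [Tv Hv]].
  exists v. split; [exact Tv|]. intros i Hi.
  rewrite (Hv i Hi), <- (Hp i), (metric_sym d Hm).
  apply (Hdel' i Hi). rewrite (metric_sym d Hm). exact (Hu i Hi).
Qed.

(* A dense orbit of the diagonal under f^(a) with a_0 >= 1 forces f to be onto: a point
   near (p, q) with p <> q cannot be taken at time 0, hence p is a limit of values of f. *)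
Lemma surjective_of_dense_diagonal_orbit (Hsc : seq_compact d) m a :
  (2 <= m)%nat -> (1 <= a 0)%nat ->
  dense_in_power d m (Orb diagonal (prodmap a f)) -> surjective f.
Proof.
  intros Hm2 Ha0 Hdense p. apply (image_closed d Hm Hsc f Hf). intros eps He.
  destruct (classic (exists q, q <> p)) as [[q Hq] | Hsingle].
  2: { exists p. destruct (classic (f p = p)) as [->|Hfp]; [rewrite (dist_self d Hm); exact He|].
       exfalso. apply Hsingle. exists (f p). exact Hfp. }
  assert (Hpq : d p q > 0).
  { destruct (metric_nonneg d Hm p q) as [Hpos|Hzero]; [exact Hpos|].
    exfalso. apply Hq. symmetry. apply (metric_eq0 d Hm). symmetry. exact Hzero. }
  pose (eta := Rmin eps (d p q) / 2).
  assert (Heta : 0 < eta) by (apply Rdiv_lt_0_compat; [apply Rmin_glb_lt|]; lra).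
  assert (Heta1 : 2 * eta <= eps) by (pose proof (Rmin_l eps (d p q)); unfold eta; lra).
  assert (Heta2 : 2 * eta <= d p q) by (pose proof (Rmin_r eps (d p q)); unfold eta; lra).
  destruct (Hdense (fun i => match i with 0%nat => p | _ => q end) eta Heta) as [u [Hu Hclose]].
  destruct (Orb_diagonal_coords a u Hu) as [n [w Hw]].
  pose proof (Hclose 0%nat ltac:(lia)) as Hp. pose proof (Hclose 1%nat ltac:(lia)) as Hq'.
  simpl in Hp, Hq'. rewrite Hw in Hp, Hq'.
  destruct (n * a 0)%nat as [|k] eqn:Hk.
  - (* n = 0: a point of the diagonal cannot be close to both p and q *)
    replace (n * a 1)%nat with 0%nat in Hq' by nia. simpl in Hp, Hq'.
    pose proof (metric_triangle d Hm p w q). rewrite (metric_sym d Hm p w) in H. lra.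
  - exists (Nat.iter k f w). rewrite (metric_sym d Hm). simpl in Hp. lra.
Qed.

(* A Delta-b-transitive system with b_0 >= 1 is onto: every point is a limit of
   f^(n b_0)(x) with n >= 1. *)
Lemma surjective_of_diagonal_transitive (Hsc : seq_compact d) r b :
  (1 <= r)%nat -> (1 <= b 0)%nat -> Delta_transitive d f r b -> surjective f.
Proof.
  intros Hr Hb0 [x Hx] p. apply (image_closed d Hm Hsc f Hf). intros eps He.
  destruct (Hx (fun _ => p) eps He 1%nat) as [n [Hn Hclose]].
  specialize (Hclose 0%nat ltac:(lia)). rewrite iter_prodmap in Hclose.
  destruct (n * b 0)%nat as [|k] eqn:Hk; [nia|].
  exists (Nat.iter k f x). rewrite (metric_sym d Hm). exact Hclose.
Qed.

(* For onto f, a dense orbit of the diagonal has dense tails: the image of its n-th point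
   under f^(k c) is its (n+k)-th point. *)
Lemma dense_diagonal_orbit_tail (Hs : surjective f) m c :
  dense_in_power d m (Orb diagonal (prodmap c f)) ->
  forall k, dense_in_power d m (orbit_from k diagonal (prodmap c f)).
Proof.
  intros Hdense k. apply (dense_under_iterates Hs m (fun i => k * c i)%nat _ _ Hdense).
  intros u Hu. destruct (Orb_diagonal_coords c u Hu) as [n [w Hw]].
  exists (Nat.iter (k + n) (prodmap c f) (fun _ => w)). split.
  - apply orbit_from_diagonal_intro; lia.
  - intros i _. rewrite iter_prodmap, Hw, <- Nat.iter_add, Nat.mul_add_distr_r. reflexivity.
Qed.

Lemma dense_diagonal_orbit_rebase (Hs : surjective f) m a :
  (forall i, (i < m)%nat -> (a 0 <= a i)%nat) ->
  dense_in_power d m (Orb diagonal (prodmap a f)) <->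
  dense_in_power d m (Orb diagonal (prodmap (fun i => a i - a 0)%nat f)).
Proof.
  intros Hle. split; intros Hdense.
  - apply (dense_under_iterates Hs m (fun _ => 0%nat) _ _ Hdense).
    intros u Hu. destruct (Orb_diagonal_coords a u Hu) as [n [z Hz]].
    exists (Nat.iter n (prodmap (fun i => a i - a 0)%nat f) (fun _ => Nat.iter (n * a 0)%nat f z)).
    split; [apply Orb_diagonal_intro|].
    intros i Hi. rewrite iter_prodmap, Hz. symmetry. apply iter_rebase, Hle, Hi.
  - apply (dense_under_iterates Hs m (fun _ => 0%nat) _ _ Hdense).
    intros u Hu. destruct (Orb_diagonal_coords _ u Hu) as [n [w Hw]].
    destruct (iter_surjective f Hs (n * a 0)%nat w) as [z Hz].
    exists (Nat.iter n (prodmap a f) (fun _ => z)). split; [apply Orb_diagonal_intro|].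
    intros i Hi. rewrite iter_prodmap, Hw, <- Hz. apply iter_rebase, Hle, Hi.
Qed.

(* (<=) with c_0 = 0: a Delta-(c_1,...,c_r)-transitive point x gives a dense f^(c)-orbit of
   the diagonal, using u = f^K x near y_0 and the image under f^K of the orbit of x. *)
Lemma dense_diagonal_orbit_of_transitive (Hs : surjective f) r c :
  (1 <= r)%nat -> c 0%nat = 0%nat -> Delta_transitive d f r (fun i => c (S i)) ->
  dense_in_power d (S r) (Orb diagonal (prodmap c f)).
Proof.
  intros Hr Hc0 [x Hx] y eps He.
  destruct (Hx (fun _ => y 0%nat) eps He 0%nat) as [n0 [_ Hn0]].
  specialize (Hn0 0%nat ltac:(lia)). rewrite iter_prodmap in Hn0. cbv beta in Hn0.
  pose (k := (n0 * c 1)%nat).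
  assert (Hdense : dense_in_power d r (fun v => exists n, forall i, (i < r)%nat ->
                     v i = Nat.iter k f (Nat.iter (n * c (S i)) f x))).
  { apply (dense_under_iterates Hs r (fun _ => k)
             (fun u => exists n, u = Nat.iter n (prodmap (fun i => c (S i)) f) (fun _ => x))).
    - intros z e He'. destruct (Hx z e He' 0%nat) as [n [_ Hn]].
      eexists. split; [exists n; reflexivity | exact Hn].
    - intros u [n ->]. eexists. split; [exists n; intros i _; reflexivity|].
      intros i _. rewrite iter_prodmap. reflexivity. }
  destruct (Hdense (fun i => y (S i)) eps He) as [v [[n Hv] Hclose]].
  exists (Nat.iter n (prodmap c f) (fun _ => Nat.iter k f x)). split; [apply Orb_diagonal_intro|].
  intros [|i] Hi; rewrite iter_prodmap.
  - rewrite Hc0, Nat.mul_0_r. exact Hn0.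
  - rewrite iter_commute, <- Hv by lia. exact (Hclose i ltac:(lia)).
Qed.

Definition visits_near (r : nat) (b : nat -> nat) (k : nat) (t : nat -> X) (x : X) : Prop :=
  exists n, (k <= n)%nat /\
    forall i, (i < r)%nat -> d (Nat.iter (n * b i) f x) (t i) < / INR (S k).

(* visits_near is open: the conditions are strict inequalities on continuous functions. *)
Lemma visits_near_open r b k t : is_open d (visits_near r b k t).
Proof.
  intros x [n [Hn Hx]].
  destruct (common_radius d (fun _ => x)
              (fun i y => d (Nat.iter (n * b i) f y) (t i) < / INR (S k)) r) as [e [He He']].
  { intros i Hi. apply (preimage_ball_open d Hm _ (iter_continuous d f Hf _)), Hx, Hi. }
  exists e. split; [exact He|]. intros y Hy. exists n. split; [exact Hn|].
  intros i Hi. exact (He' i Hi y Hy).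
Qed.

(* Density of visits_near comes from a point (u, f^(n b) u) of a tail close to (x, t). *)
Lemma visits_near_dense r c k t : c 0%nat = 0%nat ->
  dense_in_power d (S r) (orbit_from k diagonal (prodmap c f)) ->
  is_dense d (visits_near r (fun i => c (S i)) k t).
Proof.
  intros Hc0 Hdense x rho Hrho.
  pose (e := Rmin rho (/ INR (S k))).
  assert (He : e > 0) by (apply Rmin_glb_lt; [lra | apply inv_succ_pos]).
  assert (He1 : e <= rho) by apply Rmin_l.
  assert (He2 : e <= / INR (S k)) by apply Rmin_r.
  destruct (Hdense (fun i => match i with 0%nat => x | S i => t i end) e He) as [u [Hu Hclose]].
  destruct (orbit_from_diagonal_coords k c u Hu) as [n [w [Hn Hw]]].
  exists w. split.
  - specialize (Hclose 0%nat ltac:(lia)). rewrite Hw, Hc0, Nat.mul_0_r in Hclose.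
    simpl in Hclose. rewrite (metric_sym d Hm). lra.
  - exists n. split; [exact Hn|]. intros i Hi.
    specialize (Hclose (S i) ltac:(lia)). rewrite Hw in Hclose. lra.
Qed.

(* (=>) with c_0 = 0: if all tails of the f^(c)-orbit of the diagonal are dense, a point of
   the Baire intersection over k of the visits to a 1/(k+1)-net is Delta-(c_1,...,c_r)-
   transitive. *)
Lemma diagonal_transitive_of_dense_tails (Hsc : seq_compact d) (x0 : X) r c :
  c 0%nat = 0%nat ->
  (forall k, dense_in_power d (S r) (orbit_from k diagonal (prodmap c f))) ->
  Delta_transitive d f r (fun i => c (S i)).
Proof.
  intros Hc0 Hdense.
  destruct (choice (fun k (L : list (nat -> X)) => forall z, exists t,
              In t L /\ forall i, (i < r)%nat -> d (t i) (z i) < / INR (S k))) as [net Hnet].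
  { intro k. apply (product_net d Hm Hsc x0), inv_succ_pos. }
  pose (G := fun k x => forall t, In t (net k) -> visits_near r (fun i => c (S i)) k t x).
  destruct (baire d Hm Hsc x0 G) as [x Hx].
  { intro k. apply open_list_inter. intros t _. apply visits_near_open. }
  { intro k. apply dense_list_inter; [exact Hm|]. intros t _.
    split; [apply visits_near_open | apply visits_near_dense; auto]. }
  exists x. intros z eps He N.
  destruct (inv_succ_small (eps / 2) ltac:(lra)) as [M HM].
  pose (k := Nat.max N M).
  destruct (Hnet k z) as [t [Ht Htz]].
  destruct (Hx k t Ht) as [n [Hn Hnt]].
  exists n. split; [lia|]. intros i Hi. rewrite iter_prodmap. cbv beta.
  specialize (HM k ltac:(lia)). specialize (Hnt i Hi). specialize (Htz i Hi).
  pose proof (metric_triangle d Hm (Nat.iter (n * c (S i)) f x) (t i) (z i)). lra.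
Qed.

End Dynamics.

Theorem proposition5p8 (X : Type) (d : X -> X -> R) (x0 : X)
  (HX : compact_metric_space d) (f : X -> X) (Hf : continuous_map d f)
  (r : nat) (Hr : (1 <= r)%nat) (a : nat -> nat)
  (Ha : strictly_increasing_tuple (S r) a) (Ha0 : (1 <= a 0%nat)%nat) :
  (forall y : nat -> X, in_closure d (S r) (Orb diagonal (prodmap a f)) y)
  <-> Delta_transitive d f r (fun i => (a (S i) - a 0%nat)%nat).
Proof.
  destruct HX as [Hm Hsc].
  pose (c := fun i => (a i - a 0%nat)%nat).
  assert (Hc0 : c 0%nat = 0%nat) by apply Nat.sub_diag.
  assert (Hle : forall i, (i < S r)%nat -> (a 0%nat <= a i)%nat).
  { intros [|i] Hi; [lia | apply Nat.lt_le_incl, Ha; lia]. }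
  split.
  - intros Hdense.
    assert (Hs : surjective f)
      by exact (surjective_of_dense_diagonal_orbit d f Hm Hf Hsc (S r) a ltac:(lia) Ha0 Hdense).
    apply (diagonal_transitive_of_dense_tails d f Hm Hf Hsc x0 r c Hc0).
    apply (dense_diagonal_orbit_tail d f Hm Hf Hs (S r) c).
    exact (proj1 (dense_diagonal_orbit_rebase d f Hm Hf Hs (S r) a Hle) Hdense).
  - intros Htr.
    assert (Hb0 : (1 <= a 1 - a 0)%nat) by (pose proof (Ha 0%nat 1%nat); lia).
    assert (Hs : surjective f)
      by exact (surjective_of_diagonal_transitive d f Hm Hf Hsc r _ Hr Hb0 Htr).
    apply (proj2 (dense_diagonal_orbit_rebase d f Hm Hf Hs (S r) a Hle)).
    exact (dense_diagonal_orbit_of_transitive d f Hm Hf Hs r c Hr Hc0 Htr).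
Qed.
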